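(* Assume (SM), (LIP), (POT) and consider the algorithm AILFEM of the context with arbitrary $\lambda_{\mathrm{lin}},\lambda_{\mathrm{alg}}>0$. Define $\tau:=M+3M(L[3M]/\alpha)^{1/2}\ (\ge4M)$. Let $k\in\mathbb{N}_0$ with $0\le k<\underline{k}[\ell]$ and $|||u_\ell^{k,\underline{i}}|||\le\tau$. Then, if $i_{\min}\in\mathbb{N}$ satisfies $q_{\mathrm{alg}}^{i_{\min}}\le1/3$ and $0<\delta<\min\{1/L[5\tau],\,2\alpha/L[2\tau]^2\}$, it holds that $$0\le\Big(\frac1{2\delta}-\frac{L[5\tau]}2\Big)|||u_\ell^{k+1,\underline{i}}-u_\ell^{k,\underline{i}}|||^2\le\mathcal{E}(u_\ell^{k,\underline{i}})-\mathcal{E}(u_\ell^{k+1,\underline{i}})\le\Big(\frac1{\delta(1-q_{\mathrm{alg}}^{i_{\min}})}-\frac\alpha2\Big)|||u_\ell^{k+1,\underline{i}}-u_\ell^{k,\underline{i}}|||^2$$ for all $(\ell,k+1,\underline{i})\in\mathcal{Q}$.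
   Context: Abstract setting. Let $\mathcal{X}$ be a real Hilbert space with scalar product $\langle\!\langle\cdot,\cdot\rangle\!\rangle$ and norm $|||\cdot|||$, with dual space $\mathcal{X}'$ (norm $\|\cdot\|_{\mathcal{X}'}$, duality bracket $\langle\cdot,\cdot\rangle$). Let $\mathcal{A}:\mathcal{X}\to\mathcal{X}'$ be a nonlinear operator and $F\in\mathcal{X}'$ with $\mathcal{A}0\neq F$. Conditions: (SM) there is $\alpha>0$ with $\alpha|||v-w|||^2\le\langle\mathcal{A}v-\mathcal{A}w,v-w\rangle$ for all $v,w\in\mathcal{X}$; (LIP) for every $\vartheta>0$ there is $L[\vartheta]>0$ with $\langle\mathcal{A}v-\mathcal{A}w,\varphi\rangle\le L[\vartheta]\,|||v-w|||\,|||\varphi|||$ for all $v,w,\varphi\in\mathcal{X}$ with $\max\{|||v|||,|||v-w|||\}\le\vartheta$; (POT) there is a Gâteaux differentiable $\mathcal{P}:\mathcal{X}\to\mathbb{R}$ with $\langle\mathcal{A}w,v\rangle=\lim_{t\to0}(\mathcal{P}(w+tv)-\mathcal{P}(w))/t$ for all $v,w$. The energy is $\mathcal{E}(v):=\mathcal{P}(v)-F(v)$. For every closed subspace $\mathcal{Y}\subseteq\mathcal{X}$ there is a unique $u^\star_{\mathcal{Y}}\in\mathcal{Y}$ with $\langle\mathcal{A}u^\star_{\mathcal{Y}},v\rangle=F(v)$ for all $v\in\mathcal{Y}$; $u^\star:=u^\star_{\mathcal{X}}$. Put $M:=\|F-\mathcal{A}0\|_{\mathcal{X}'}/\alpha$.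 Meshes. $\mathcal{T}_0$ is an initial conforming simplicial triangulation; $\mathtt{refine}(\mathcal{T}_H,\mathcal{M}_H)$ is the coarsest newest-vertex-bisection (NVB) refinement of $\mathcal{T}_H$ in which all elements of $\mathcal{M}_H\subseteq\mathcal{T}_H$ are refined; $\mathbb{T}(\mathcal{T}_H)$ is the set of meshes obtained from $\mathcal{T}_H$ by finitely many NVB steps, $\mathbb{T}:=\mathbb{T}(\mathcal{T}_0)$. Each $\mathcal{T}_H\in\mathbb{T}$ is associated with a finite-dimensional subspace $\mathcal{X}_H\subset\mathcal{X}$, nested: $\mathcal{X}_H\subseteq\mathcal{X}_h$ if $\mathcal{T}_h\in\mathbb{T}(\mathcal{T}_H)$. Write $u_H^\star:=u^\star_{\mathcal{X}_H}$. Zarantonello map: for $\delta>0$, $w_H\in\mathcal{X}_H$, $\Phi_H(\delta;w_H)\in\mathcal{X}_H$ is the unique solution of $\langle\!\langle\Phi_H(\delta;w_H),v_H\rangle\!\rangle=\langle\!\langle w_H,v_H\rangle\!\rangle+\delta[F(v_H)-\langle\mathcal{A}w_H,v_H\rangle]$ for all $v_H\in\mathcal{X}_H$. Algebraic solver: there is $0<q_{\mathrm{alg}}<1$ and for each $\mathcal{T}_H$ a map $\Psi_H:\mathcal{X}'\times\mathcal{X}_H\to\mathcal{X}_H$ such that for every $\varphi\in\mathcal{X}'$, with $w_H^\star\in\mathcal{X}_H$ solving $\langle\!\langle w_H^\star,v_H\rangle\!\rangle=\varphi(v_H)$ for all $v_H\in\mathcal{X}_H$, one has $|||w_H^\star-\Psi_H(\varphi;w_H)|||\le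 q_{\mathrm{alg}}|||w_H^\star-w_H|||$ for all $w_H\in\mathcal{X}_H$. One writes $\Psi_H(w_H^\star;\cdot)$ for $\Psi_H(\varphi;\cdot)$. Estimator: for $\mathcal{T}_H\in\mathbb{T}$, $T\in\mathcal{T}_H$, $v_H\in\mathcal{X}_H$ a number $\eta_H(T,v_H)\ge0$ is given; $\eta_H(\mathcal{U},v_H):=(\sum_{T\in\mathcal{U}}\eta_H(T,v_H)^2)^{1/2}$ for $\mathcal{U}\subseteq\mathcal{T}_H$ and $\eta_H(v_H):=\eta_H(\mathcal{T}_H,v_H)$. Index $\ell$ refers to $\mathcal{T}_\ell$, $\mathcal{X}_\ell$, $\Phi_\ell$, $\Psi_\ell$, $\eta_\ell$, $u_\ell^\star$. Algorithm AILFEM. Input: $\mathcal{T}_0$, $0<\theta\le1$, $C_{\mathrm{mark}}\ge1$, $\lambda_{\mathrm{lin}},\lambda_{\mathrm{alg}}>0$, $i_{\min}\in\mathbb{N}$, $\delta>0$, $u_0^{0,0}\in\mathcal{X}_0$ with $|||u_0^{0,0}|||\le2M$; set $u_0^{0,\star}:=u_0^{0,\underline{i}}:=u_0^{0,0}$. For $\ell=0,1,2,\dots$: (I) For $k=1,2,\dots$: set $u_\ell^{k,0}:=u_\ell^{k-1,\underline{i}}$ and $u_\ell^{k,\star}:=\Phi_\ell(\delta;u_\ell^{k-1,\underline{i}})$ (not computed). For $i=1,2,\dots$: compute $u_\ell^{k,i}:=\Psi_\ell(u_\ell^{k,\star};u_\ell^{k,i-1})$ and $\eta_\ell(u_\ell^{k,i})$;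 terminate the $i$-loop with $\underline{i}[\ell,k]:=i$ if $|||u_\ell^{k,i-1}-u_\ell^{k,i}|||\le\lambda_{\mathrm{alg}}[\lambda_{\mathrm{lin}}\eta_\ell(u_\ell^{k,i})+|||u_\ell^{k,i}-u_\ell^{k,0}|||]$ and $i_{\min}\le i$. Write $u_\ell^{k,\underline{i}}:=u_\ell^{k,\underline{i}[\ell,k]}$. Terminate the $k$-loop with $\underline{k}[\ell]:=k$ if $\mathcal{E}(u_\ell^{k,0})-\mathcal{E}(u_\ell^{k,\underline{i}})\le\lambda_{\mathrm{lin}}^2\eta_\ell(u_\ell^{k,\underline{i}})^2$ and $|||u_\ell^{k,\underline{i}}|||\le2M$. (II) Choose $\mathcal{M}_\ell\subseteq\mathcal{T}_\ell$ with $\theta\,\eta_\ell(u_\ell^{\underline{k},\underline{i}})^2\le\eta_\ell(\mathcal{M}_\ell,u_\ell^{\underline{k},\underline{i}})^2$ and $\#\mathcal{M}_\ell\le C_{\mathrm{mark}}\min\{\#\mathcal{U}:\mathcal{U}\subseteq\mathcal{T}_\ell,\ \theta\eta_\ell(u_\ell^{\underline{k},\underline{i}})^2\le\eta_\ell(\mathcal{U},u_\ell^{\underline{k},\underline{i}})^2\}$. (III) $\mathcal{T}_{\ell+1}:=\mathtt{refine}(\mathcal{T}_\ell,\mathcal{M}_\ell)$ and $u_{\ell+1}^{0,0}:=u_{\ell+1}^{0,\underline{i}}:=u_{\ell+1}^{0,\star}:=u_\ell^{\underline{k},\underline{i}}$. Index set: $\mathcal{Q}:=\{(\ell,k,i)\in\mathbb{N}_0^3: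 u_\ell^{k,i}\text{ is used in the algorithm}\}$; $\underline{k}[\ell]:=\sup\{k\in\mathbb{N}:(\ell,k,0)\in\mathcal{Q}\}$, $\underline{i}[\ell,k]:=\sup\{i\in\mathbb{N}:(\ell,k,i)\in\mathcal{Q}\}$; ''$(\ell,k,\underline{i})\in\mathcal{Q}$'' means $(\ell,k,\underline{i}[\ell,k])\in\mathcal{Q}$. *)

From HB Require Import structures.
From mathcomp Require Import all_boot all_order all_algebra.
From mathcomp Require Import all_classical all_reals topology normedtype.
Set Implicit Arguments. Unset Strict Implicit. Unset Printing Implicit Defensive.
Import Order.TTheory GRing.Theory Num.Theory.
Import numFieldNormedType.Exports.
Local Open Scope classical_set_scope.
Local Open Scope ring_scope.

Section Hilbert.
Context {R : realType} {V : lmodType R}.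
Variable ip : V -> V -> R.

Definition hnorm (v : V) : R := Num.sqrt (ip v v).

Definition is_inner_product : Prop :=
  [/\ (forall u v, ip u v = ip v u),
      (forall a u v w, ip (a *: u + v) w = a * ip u w + ip v w)
    & (forall v, v != 0 -> 0 < ip v v)].

Definition hcomplete : Prop :=
  forall x : nat -> V,
    (forall e : R, 0 < e -> exists N : nat, forall m n : nat,
        (N <= m)%N -> (N <= n)%N -> hnorm (x m - x n) < e) ->
    exists x0 : V, forall e : R, 0 < e -> exists N : nat, forall n : nat,
        (N <= n)%N -> hnorm (x n - x0) < e.

Definition is_Hilbert : Prop := is_inner_product /\ hcomplete.

Definition in_dual (phi : V -> R) : Prop :=
  (forall a u v, phi (a *: u + v) = a * phi u + phi v) /\
  (exists C : R, forall v, `|phi v| <= C * hnorm v).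

Definition dual_norm (phi : V -> R) : R :=
  sup [set `|phi v| | v in [set v | hnorm v <= 1]].

Definition fd_subspace (XH : set V) : Prop :=
  [/\ XH 0,
      (forall (a : R) u v, XH u -> XH v -> XH (a *: u + v))
    & exists s : seq V, (forall x, x \in s -> XH x) /\
        forall x, XH x -> exists c : nat -> R,
          x = \sum_(i < size s) c i *: s`_i].

Variables (A : V -> V -> R) (F : V -> R).
(* A : X -> X', written A w v = <A w, v> ; F in X' *)

Definition strongly_monotone (alpha : R) : Prop :=
  0 < alpha /\
  forall v w, alpha * hnorm (v - w) ^+ 2 <= A v (v - w) - A w (v - w).

Definition loc_lipschitz (L : R -> R) : Prop :=
  forall theta : R, 0 < theta ->
    0 < L theta /\
    forall v w phi, Num.max (hnorm v) (hnorm (v - w)) <= theta ->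
      A v phi - A w phi <= L theta * hnorm (v - w) * hnorm phi.

Definition potential (P : V -> R) : Prop :=
  forall w v : V,
    (fun t : R => (P (w + t *: v) - P w) / t) @ 0^' --> A w v.

Definition energy (P : V -> R) (v : V) : R := P v - F v.

Definition zarantonello (XH : set V) (delta : R) (w u : V) : Prop :=
  XH u /\ forall v, XH v -> ip u v = ip w v + delta * (F v - A w v).

(* algebraic solver with contraction factor q_alg on XH; following the
   paper's notation Psi_H(w*; .), the solver is indexed by the
   representer w* in XH of the right-hand side functional *)
Definition alg_solver (XH : set V) (qalg : R) (Psi : V -> V -> V) : Prop :=
  [/\ 0 < qalg, qalg < 1 &
      forall wstar w, XH wstar -> XH w ->
        XH (Psi wstar w) /\
        hnorm (wstar - Psi wstar w) <= qalg * hnorm (wstar - w)].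

(* Run of the k-loop (I) of AILFEM on a fixed level l (mesh T_l with
   discrete space XH, estimator eta, solver Psi), for the steps
   k' = 1, ..., K.  u k i = u_l^{k,i}, ustar k = u_l^{k,*},
   ib k = underline{i}[l,k]; u 0 0 is the initial iterate u_l^{0,0}
   with ib 0 = 0 (u_l^{0,ib} := u_l^{0,0}).  The i-loop of step k'
   terminates (i.e. (l,k',ib) in Q) with ib k' the first admissible
   index. *)
Definition inner_crit (eta : V -> R) (lamlin lamalg : R)
  (u : nat -> nat -> V) (k i : nat) : Prop :=
  hnorm (u k i.-1 - u k i) <=
    lamalg * (lamlin * eta (u k i) + hnorm (u k i - u k 0%N)).

Definition outer_stop (P : V -> R) (M : R) (eta : V -> R) (lamlin : R)
  (u : nat -> nat -> V) (ib : nat -> nat) (k : nat) : Prop :=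
  energy P (u k 0%N) - energy P (u k (ib k)) <= lamlin ^+ 2 * eta (u k (ib k)) ^+ 2
  /\ hnorm (u k (ib k)) <= 2 * M.

Definition ailfem_level_run (XH : set V) (delta : R) (Psi : V -> V -> V)
  (eta : V -> R) (lamlin lamalg : R) (imin : nat)
  (u : nat -> nat -> V) (ustar : nat -> V) (ib : nat -> nat) (K : nat) : Prop :=
  XH (u 0%N 0%N) /\ ib 0%N = 0%N /\
  forall k : nat, (1 <= k <= K)%N ->
    [/\ u k 0%N = u k.-1 (ib k.-1),
        zarantonello XH delta (u k.-1 (ib k.-1)) (ustar k),
        (forall i : nat, (1 <= i)%N -> u k i = Psi (ustar k) (u k i.-1)),
        (1 <= ib k)%N /\ inner_crit eta lamlin lamalg u k (ib k) /\ (imin <= ib k)%N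
      & (forall i : nat, (1 <= i)%N -> (i < ib k)%N ->
           ~ (inner_crit eta lamlin lamalg u k i /\ (imin <= i)%N))].

End Hilbert.

From HB Require Import structures.
From mathcomp Require Import all_boot all_order all_algebra.
From mathcomp Require Import all_classical all_reals topology normedtype derive.
From mathcomp Require Import ring lra.
Import Order.TTheory GRing.Theory Num.Theory.
Import numFieldNormedType.Exports.
Local Open Scope classical_set_scope.
Local Open Scope ring_scope.
Set Implicit Arguments. Unset Strict Implicit.

(* Write w, v for two consecutive final iterates and x = Phi(delta; w) for the
   exact Zarantonello iterate between them.  Then
     E(w) - E(v) = z - (P v - P w - <A w, v - w>),  z := F(v - w) - <A w, v - w>.
   The mean value theorem on the segment [w, v] together with (SM), resp.
   (LIP), puts the bracket between alpha/2 |||v - w|||^2 and L/2 |||v - w|||^2.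
   The Zarantonello equation gives delta z = <<x - w, v - w>>, and since the
   solver output v approximates x with relative error q <= 1/3, this scalar
   product lies between |||v - w|||^2 / 2 and |||v - w|||^2 / (1 - q).  The a
   priori bound |||x - w||| <= M + |||w||| <= 2 tau keeps the segment inside the
   ball of radius 5 tau on which L[5 tau] is a Lipschitz constant. *)

Definition linear_form (R : realType) (V : lmodType R) (phi : V -> R) : Prop :=
  forall a u v, phi (a *: u + v) = a * phi u + phi v.

Section LinearForm.
Context {R : realType} {V : lmodType R}.
Variable phi : V -> R.
Hypothesis phi_lin : linear_form phi.

Lemma linear_form0 : phi 0 = 0.
Proof. by have := phi_lin 1 0 0; rewrite scaler0 addr0 mul1r => e; lra. Qed.

Lemma linear_formZ a u : phi (a *: u) = a * phi u.
Proof. by have := phi_lin a u 0; rewrite !addr0 linear_form0 addr0. Qed.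

Lemma linear_formD u v : phi (u + v) = phi u + phi v.
Proof. by have := phi_lin 1 u v; rewrite scale1r mul1r. Qed.

Lemma linear_formB u v : phi (u - v) = phi u - phi v.
Proof. by rewrite linear_formD -scaleN1r linear_formZ mulN1r. Qed.

End LinearForm.

Lemma in_dualB (R : realType) (V : lmodType R) (ip : V -> V -> R) (f g : V -> R) :
  in_dual ip f -> in_dual ip g -> in_dual ip (fun v => f v - g v).
Proof.
move=> [fl [Cf hf]] [gl [Cg hg]]; split=> [a u v|]; first by rewrite fl gl; ring.
exists (Cf + Cg) => v; rewrite mulrDl.
by apply: le_trans (ler_normB _ _) _; apply: lerD.
Qed.

Lemma fd_subspaceB (R : realType) (V : lmodType R) (XH : set V) u v :
  fd_subspace XH -> XH u -> XH v -> XH (u - v).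
Proof. by move=> [_ Xlin _] Xu Xv; rewrite addrC -scaleN1r; apply: Xlin. Qed.

Section InnerProduct.
Context {R : realType} {V : lmodType R}.
Variable ip : V -> V -> R.
Hypothesis hip : is_inner_product ip.

Lemma ip_linear_forml w : linear_form (ip^~ w).
Proof. by case: hip => _ hL _ a u v; apply: hL. Qed.

Lemma ipC u v : ip u v = ip v u.
Proof. by case: hip. Qed.

Lemma ip_linear_formr w : linear_form (ip w).
Proof. by move=> a u v; rewrite !(ipC w) ip_linear_forml. Qed.

Lemma ip_ge0 v : 0 <= ip v v.
Proof.
have [->|v0] := eqVneq v 0; first by rewrite (linear_form0 (ip_linear_forml 0)).
by case: hip => _ _ /(_ v v0) /ltW.
Qed.

Lemma hnorm_ge0 v : 0 <= hnorm ip v.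
Proof. exact: sqrtr_ge0. Qed.

Lemma hnorm_sqr v : hnorm ip v ^+ 2 = ip v v.
Proof. by rewrite sqr_sqrtr // ip_ge0. Qed.

Lemma hnorm0 : hnorm ip 0 = 0.
Proof. by rewrite /hnorm (linear_form0 (ip_linear_forml 0)) sqrtr0. Qed.

Lemma hnorm_eq0 v : hnorm ip v = 0 -> v = 0.
Proof.
move=> n0; have [//|v0] := eqVneq v 0.
by case: hip => _ _ /(_ v v0); rewrite -hnorm_sqr n0 expr0n ltxx.
Qed.

Lemma hnorm_gt0 v : v != 0 -> 0 < hnorm ip v.
Proof.
by move=> v_neq0; rewrite lt0r hnorm_ge0 andbT; apply: contra_neq v_neq0 => /hnorm_eq0.
Qed.

Lemma hnormZ a v : hnorm ip (a *: v) = `|a| * hnorm ip v.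
Proof.
rewrite /hnorm (linear_formZ (ip_linear_forml _)) (linear_formZ (ip_linear_formr _)).
by rewrite mulrA -expr2 sqrtrM ?sqr_ge0 // sqrtr_sqr.
Qed.

Lemma cauchy_schwarz u v : `|ip u v| <= hnorm ip u * hnorm ip v.
Proof.
have [->|v0] := eqVneq v 0.
  by rewrite (linear_form0 (ip_linear_formr _)) normr0 mulr_ge0 ?hnorm_ge0.
have c0 : 0 < ip v v by case: hip => _ _; apply.
set a := ip u u; set b := ip u v; set c := ip v v.
have := ip_ge0 (u - (b / c) *: v).
rewrite (linear_formB (ip_linear_forml _)) !(linear_formB (ip_linear_formr _)).
rewrite !(linear_formZ (ip_linear_forml _)) !(linear_formZ (ip_linear_formr _)).
rewrite (ipC v u) -/a -/b -/c => h.
have b2 : b ^+ 2 <= a * c.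
  rewrite -ler_pdivrMr // expr2 mulrAC.
  by move: h; rewrite divfK ?gt_eqF //; lra.
by rewrite -sqrtr_sqr -sqrtrM ?ip_ge0 // ler_sqrt // mulr_ge0 // ip_ge0.
Qed.

Lemma ler_hnormD u v : hnorm ip (u + v) <= hnorm ip u + hnorm ip v.
Proof.
rewrite -(ler_pXn2r (n := 2)) ?nnegrE ?addr_ge0 ?hnorm_ge0 // hnorm_sqr.
rewrite (linear_formD (ip_linear_forml _)) !(linear_formD (ip_linear_formr _)).
rewrite (ipC v u) -!hnorm_sqr.
have := ler_norm (ip u v); have := cauchy_schwarz u v; lra.
Qed.

Lemma hnorm_opp v : hnorm ip (- v) = hnorm ip v.
Proof. by rewrite -scaleN1r hnormZ normrN1 mul1r. Qed.

Lemma ler_hnormB u v : hnorm ip (u - v) <= hnorm ip u + hnorm ip v.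
Proof. by rewrite -(hnorm_opp v) ler_hnormD. Qed.

Section RelativeError.
Variables (rho : R) (x w v : V).
Hypothesis rel_err : hnorm ip (x - v) <= rho * hnorm ip (x - w).

Lemma rel_err_hnorm_le : hnorm ip (v - w) <= (1 + rho) * hnorm ip (x - w).
Proof.
have -> : v - w = (x - w) - (x - v) by rewrite opprB [RHS]addrC addrA subrK.
by apply: le_trans (ler_hnormB _ _) _; rewrite mulrDl mul1r lerD2l.
Qed.

Hypothesis rho_small : 0 <= rho <= 1 / 3.

Lemma rel_err_ip_bounds :
  hnorm ip (v - w) ^+ 2 / 2 <= ip (x - w) (v - w) <= hnorm ip (v - w) ^+ 2 / (1 - rho).
Proof.
have xv : (x - w) - (v - w) = x - v by rewrite opprB addrA subrK.
set e := hnorm ip (x - v); set d := hnorm ip (v - w).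
have d0 : 0 <= d := hnorm_ge0 (v - w).
have e0 : 0 <= e := hnorm_ge0 (x - v).
have [rho0 rho13] := andP rho_small.
have err_le : e * (1 - rho) <= rho * d.
  have := ler_hnormD (x - v) (v - w); rewrite addrA subrK -/e -/d.
  by move=> /(ler_wpM2l rho0); move: rel_err; rewrite -/e; lra.
have -> : ip (x - w) (v - w) = ip (x - v) (v - w) + d ^+ 2.
  by rewrite -xv [in RHS](linear_formB (ip_linear_forml _)) /d hnorm_sqr subrK.
have := cauchy_schwarz (x - v) (v - w); rewrite -/e -/d ler_norml => /andP[cs1 cs2].
apply/andP; split.
  rewrite ler_pdivrMr //; have : e <= d / 2 by nra.
  by move=> /(ler_wpM2r d0); nra.
rewrite ler_pdivlMr ?subr_gt0; last by lra.
have := ler_wpM2r d0 err_le; nra.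
Qed.

End RelativeError.

Lemma dual_norm_ubound (phi : V -> R) : in_dual ip phi ->
  has_ubound [set `|phi v| | v in [set v | hnorm ip v <= 1]].
Proof.
move=> [_ [C hC]]; exists `|C| => _ [v /= v1 <-]; apply: le_trans (hC v) _.
apply: le_trans (ler_norm _) _; rewrite normrM (ger0_norm (hnorm_ge0 _)).
by rewrite ler_piMr.
Qed.

Lemma dual_norm_ge0 (phi : V -> R) : in_dual ip phi -> 0 <= dual_norm ip phi.
Proof.
move=> hphi; apply: (ub_le_sup (dual_norm_ubound hphi)).
by exists 0; rewrite /= ?hnorm0 ?ler01 // (linear_form0 hphi.1) normr0.
Qed.

Lemma dual_norm_bound (phi : V -> R) v :
  in_dual ip phi -> `|phi v| <= dual_norm ip phi * hnorm ip v.
Proof.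
move=> hphi; have [v0|v_neq0] := eqVneq v 0.
  by rewrite v0 (linear_form0 hphi.1) normr0 hnorm0 mulr0.
have n0 := hnorm_gt0 v_neq0.
have unit_v : hnorm ip ((hnorm ip v)^-1 *: v) = 1.
  by rewrite hnormZ ger0_norm ?invr_ge0 ?hnorm_ge0 // mulVf ?gt_eqF.
have : `|phi ((hnorm ip v)^-1 *: v)| <= dual_norm ip phi.
  apply: (ub_le_sup (dual_norm_ubound hphi)).
  by exists ((hnorm ip v)^-1 *: v) => //=; rewrite unit_v.
rewrite (linear_formZ hphi.1) normrM ger0_norm ?invr_ge0 ?hnorm_ge0 //.
by rewrite mulrC ler_pdivrMr.
Qed.

Lemma dual_norm_gt0 (phi : V -> R) v :
  in_dual ip phi -> phi v != 0 -> 0 < dual_norm ip phi.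
Proof.
move=> hphi phi_v; have := dual_norm_bound v hphi.
have : 0 < `|phi v| by rewrite normr_gt0.
move=> /lt_le_trans h /h; rewrite pmulr_lgt0 // hnorm_gt0 //.
by apply: contra_neq phi_v => ->; apply: linear_form0 hphi.1.
Qed.

End InnerProduct.

(* The mean value theorem for t |-> f t - df 0 * t - b * t ^+ 2 / 2. *)
Lemma MVT_second_order (R : realType) (f df : R -> R) (b : R) :
  (forall t : R, is_derive t (1 : R) f (df t)) ->
  exists2 c, c \in `]0, 1[%R & f 1 - f 0 - df 0 - b / 2 = df c - df 0 - b * c.
Proof.
move=> f_df.
pose g := f - (df 0 \*: @id R) - (b / 2 \*: (@id R * @id R)).
have g_dg t : is_derive t (1 : R) g (df t - df 0 *: 1 - b / 2 *: (t *: 1 + t *: 1)).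
  exact: is_deriveB.
have [|c c01 gc] := MVT ltr01 (fun x _ => g_dg x).
  apply: derivable_within_continuous => x _.
  exact: (@ex_derive _ _ _ _ _ _ _ (g_dg x)).
exists c => //.
have : f 1 - df 0 * 1 - b / 2 * (1 * 1) - (f 0 - df 0 * 0 - b / 2 * (0 * 0))
    = (df c - df 0 * 1 - b / 2 * (c * 1 + c * 1)) * (1 - 0) := gc.
lra.
Qed.

Section Energy.
Context {R : realType} {V : lmodType R}.
Variables (ip A : V -> V -> R) (F P : V -> R).
Hypotheses (hip : is_inner_product ip) (pot : potential A P).

Lemma potential_is_derive w d t :
  is_derive t (1 : R) (fun s : R => P (w + s *: d)) (A (w + t *: d) d).
Proof.
have quotient_eq : (fun h : R => h^-1 *: (((fun s : R => P (w + s *: d)) \o shift t)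
      (h *: (1 : R)) - P (w + t *: d)))
    = (fun h : R => (P (w + t *: d + h *: d) - P (w + t *: d)) / h).
  apply/funext => h /=; rewrite [_%:A]mulr1 -[_ *: _]/(h^-1 * _) mulrC.
  by rewrite addrAC -addrA -scalerDl addrC.
have := @pot (w + t *: d) d; rewrite -quotient_eq => quotient_cvg.
apply: DeriveDef; last exact: cvg_lim.
  exact: cvgP quotient_cvg.
Qed.

Lemma potential_increment_ge alpha w d :
  (forall v, linear_form (A v)) -> strongly_monotone ip A alpha ->
  A w d + alpha / 2 * hnorm ip d ^+ 2 <= P (w + d) - P w.
Proof.
move=> A_lin [_ sm].
have [c /[!in_itv] /andP[c0 _]] :=
  MVT_second_order (alpha * hnorm ip d ^+ 2) (potential_is_derive w d).
rewrite /= scale1r scale0r addr0 => mvt.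
have : alpha * c * hnorm ip d ^+ 2 <= A (w + c *: d) d - A w d.
  rewrite -(ler_pM2l c0); have := sm (w + c *: d) w.
  rewrite addrAC subrr add0r (hnormZ hip) gtr0_norm // !(linear_formZ (A_lin _)).
  rewrite mulrBr; suff -> : alpha * (c * hnorm ip d) ^+ 2
                          = c * (alpha * c * hnorm ip d ^+ 2) by [].
  by ring.
move: mvt; set n := hnorm ip d; set a1 := A (w + c *: d) d; lra.
Qed.

Lemma potential_increment_le L theta w d :
  loc_lipschitz ip A L -> 0 < theta -> hnorm ip w + hnorm ip d <= theta ->
  P (w + d) - P w <= A w d + L theta / 2 * hnorm ip d ^+ 2.
Proof.
move=> lip theta0 wd_theta; have [_ lip_theta] := lip theta theta0.
have [c /[!in_itv] /andP[c0 c1]] :=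
  MVT_second_order (L theta * hnorm ip d ^+ 2) (potential_is_derive w d).
rewrite /= scale1r scale0r addr0 => mvt.
have cd : hnorm ip (c *: d) = c * hnorm ip d by rewrite (hnormZ hip) gtr0_norm.
have cd_le : c * hnorm ip d <= hnorm ip d by rewrite ler_piMl ?hnorm_ge0 ?ltW.
have segment : Num.max (hnorm ip (w + c *: d)) (hnorm ip (c *: d)) <= theta.
  rewrite ge_max cd; apply/andP; split; last first.
    by apply: le_trans cd_le (le_trans _ wd_theta); rewrite lerDr hnorm_ge0.
  apply: le_trans (ler_hnormD hip _ _) (le_trans _ wd_theta).
  by rewrite cd lerD2l.
have := lip_theta (w + c *: d) w d; rewrite addrAC subrr add0r => /(_ segment).
move: mvt; rewrite cd; set n := hnorm ip d; set a1 := A (w + c *: d) d.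
nra.
Qed.

Lemma strongly_monotone_le_lipschitz alpha L theta (v : V) :
  strongly_monotone ip A alpha -> loc_lipschitz ip A L -> 0 < theta -> v != 0 ->
  alpha <= L theta.
Proof.
move=> [_ sm] lip theta0 v_neq0; have [_ lip_theta] := lip theta theta0.
have nv0 := hnorm_gt0 hip v_neq0.
pose v1 := (theta / hnorm ip v) *: v.
have nv1 : hnorm ip v1 = theta.
  by rewrite (hnormZ hip) ger0_norm ?divr_ge0 ?ltW // divfK ?gt_eqF.
have := sm v1 0; have := lip_theta v1 0 v1; rewrite !subr0 nv1 maxxx lexx => /(_ isT).
move=> /[swap] /le_trans /[apply]; rewrite -mulrA -expr2 ler_pM2r //.
by rewrite exprn_gt0.
Qed.

Lemma zarantonello_ip (XH : set V) delta w x v :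
  zarantonello ip A F XH delta w x -> XH v -> ip (x - w) v = delta * (F v - A w v).
Proof.
move=> [_ zx] Xv.
by rewrite (linear_formB (ip_linear_forml hip v)) zx // addrAC subrr add0r.
Qed.

Lemma zarantonello_step_le (XH : set V) delta alpha L theta w x :
  (forall v, in_dual ip (A v)) -> in_dual ip F -> fd_subspace XH ->
  loc_lipschitz ip A L -> 0 < theta -> 0 < alpha -> alpha <= L theta ->
  0 < delta -> delta * L theta <= 1 ->
  XH w -> zarantonello ip A F XH delta w x -> hnorm ip w <= theta ->
  hnorm ip (x - w) <= dual_norm ip (fun v => F v - A 0 v) / alpha + hnorm ip w.
Proof.
move=> A_dual F_dual XH_sub lip theta0 alpha0 alpha_L delta0 delta_L Xw zx w_theta.
have [L0 lip_theta] := lip theta theta0.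
have phi_dual := in_dualB F_dual (A_dual 0).
have Xxw : XH (x - w) by apply: fd_subspaceB => //; case: zx.
have w_lip : Num.max (hnorm ip 0) (hnorm ip (0 - w)) <= theta.
  by rewrite sub0r (hnorm_opp hip) (hnorm0 hip) ge_max w_theta ltW.
have := lip_theta 0 w (x - w) w_lip; rewrite sub0r (hnorm_opp hip).
have := dual_norm_bound hip (x - w) phi_dual; rewrite ler_norml => /andP[_].
have := zarantonello_ip zx Xxw; rewrite -(hnorm_sqr hip).
have := dual_norm_ge0 hip phi_dual; have := hnorm_ge0 ip w.
set a := hnorm ip (x - w); set dn := dual_norm _ _; set nw := hnorm ip w.
set Lt := L theta in L0 alpha_L delta_L *.
set Fxw := F (x - w); set A0 := A 0 (x - w); set Aw := A w (x - w).
move=> nw0 dn0 a2 phi_le lip_le.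
have a_le : a ^+ 2 <= delta * (dn + Lt * nw) * a.
  by rewrite a2 -mulrA; apply: ler_wpM2l; [exact: ltW | lra].
have step_le : a <= delta * (dn + Lt * nw).
  have [->|a0] := eqVneq a 0.
    by rewrite mulr_ge0 ?addr_ge0 ?mulr_ge0 // ?(ltW delta0) ?(ltW L0).
  by move: a_le; rewrite expr2 ler_pM2r // lt0r a0 hnorm_ge0.
have delta_alpha : delta * alpha <= 1.
  by apply: le_trans delta_L; apply: ler_wpM2l; [exact: ltW | exact: alpha_L].
have : delta * dn <= dn / alpha.
  by rewrite ler_pdivlMr // mulrAC ler_piMl.
have := ler_piMl nw0 delta_L; lra.
Qed.

Lemma inexact_zarantonello_energy_bounds (XH : set V) delta alpha L theta rho w x v :
  (forall v, in_dual ip (A v)) -> in_dual ip F -> fd_subspace XH ->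
  strongly_monotone ip A alpha -> loc_lipschitz ip A L -> 0 < theta ->
  0 < delta -> 0 <= rho <= 1 / 3 ->
  XH w -> XH v -> zarantonello ip A F XH delta w x ->
  hnorm ip (x - v) <= rho * hnorm ip (x - w) ->
  hnorm ip w + hnorm ip (v - w) <= theta ->
  (1 / (2 * delta) - L theta / 2) * hnorm ip (v - w) ^+ 2
    <= energy F P w - energy F P v
    <= (1 / (delta * (1 - rho)) - alpha / 2) * hnorm ip (v - w) ^+ 2.
Proof.
move=> A_dual F_dual XH_sub sm lip theta0 delta0 rho_small Xw Xv zx rel_err wv_theta.
set d := hnorm ip (v - w).
have /andP[ip_ge ip_le] := rel_err_ip_bounds hip rel_err rho_small.
rewrite (zarantonello_ip zx (fd_subspaceB XH_sub Xv Xw)) -/d in ip_ge ip_le.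
have incr_ge := potential_increment_ge w (v - w) (fun v => (A_dual v).1) sm.
have incr_le := potential_increment_le lip theta0 wv_theta.
have wv : w + (v - w) = v by rewrite addrCA subrr addr0.
rewrite wv -/d in incr_ge incr_le.
have -> : energy F P w - energy F P v
    = (F (v - w) - A w (v - w)) - (P v - P w - A w (v - w)).
  by rewrite /energy (linear_formB F_dual.1); ring.
set z := F (v - w) - A w (v - w) in ip_ge ip_le *.
have [rho0 rho13] := andP rho_small.
have z_ge : 1 / (2 * delta) * d ^+ 2 <= z.
  by rewrite mul1r mulrC ler_pdivrMr ?mulr_gt0 //; lra.
have z_le : z <= 1 / (delta * (1 - rho)) * d ^+ 2.
  rewrite mul1r mulrC ler_pdivlMr ?mulr_gt0 ?subr_gt0 //; last by lra.
  by move: ip_le; rewrite ler_pdivlMr ?subr_gt0; lra.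
apply/andP; split; lra.
Qed.

End Energy.

Section Algorithm.
Context {R : realType} {V : lmodType R}.
Variables (ip A : V -> V -> R) (F : V -> R) (XH : set V) (qalg : R) (Psi : V -> V -> V).
Hypothesis solver : alg_solver ip XH qalg Psi.

Lemma alg_solver_iterates x (it : nat -> V) :
  XH x -> XH (it 0%N) -> (forall i, it i.+1 = Psi x (it i)) ->
  forall i, XH (it i) /\ hnorm ip (x - it i) <= qalg ^+ i * hnorm ip (x - it 0%N).
Proof.
move=> Xx Xit0 itS; elim=> [|i [Xi err_i]]; first by rewrite expr0 mul1r.
have [q0 _ contraction] := solver; have [XS errS] := contraction x (it i) Xx Xi.
rewrite itS; split=> //; apply: le_trans errS _.
by rewrite exprS -mulrA; apply: ler_wpM2l; first exact: ltW.
Qed.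

Variables (delta : R) (eta : V -> R) (lamlin lamalg : R) (imin : nat).
Variables (u : nat -> nat -> V) (ustar : nat -> V) (ib : nat -> nat).

Lemma ailfem_run_in_space K :
  ailfem_level_run ip A F XH delta Psi eta lamlin lamalg imin u ustar ib K ->
  forall j, (j <= K)%N -> XH (u j (ib j)).
Proof.
move=> [Xu00 [ib0 step]]; elim=> [_|j IH jK]; first by rewrite ib0.
have [u0 [Xs _] uS _ _] := step j.+1 jK.
have Xu0 : XH (u j.+1 0%N) by rewrite u0; apply: IH; apply: ltnW.
exact: (alg_solver_iterates Xs Xu0 (fun i => uS i.+1 isT) _).1.
Qed.

Lemma ailfem_run_last_step K :
  ailfem_level_run ip A F XH delta Psi eta lamlin lamalg imin u ustar ib K.+1 ->
  [/\ XH (u K (ib K)), zarantonello ip A F XH delta (u K (ib K)) (ustar K.+1),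
      XH (u K.+1 (ib K.+1)),
      hnorm ip (ustar K.+1 - u K.+1 (ib K.+1))
        <= qalg ^+ ib K.+1 * hnorm ip (ustar K.+1 - u K (ib K))
    & (imin <= ib K.+1)%N].
Proof.
move=> run; have XuK := ailfem_run_in_space run (leqnSn K).
have [_ [_ step]] := run; have [u0 zx uS [_ [_ imin_ib]] _] := step K.+1 (leqnn _).
have Xu0 : XH (u K.+1 0%N) by rewrite u0.
have [Xu err] := alg_solver_iterates zx.1 Xu0 (fun i => uS i.+1 isT) (ib K.+1).
by split=> //; rewrite -u0.
Qed.

End Algorithm.
Theorem lemma7 (R : realType) (V : lmodType R) (ip : V -> V -> R)
  (A : V -> V -> R) (F : V -> R) (P : V -> R) (alpha : R) (L : R -> R)
  (XH : set V) (qalg : R) (Psi : V -> V -> V) (eta : V -> R)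
  (lamlin lamalg delta : R) (imin : nat)
  (u : nat -> nat -> V) (ustar : nat -> V) (ib : nat -> nat) (k : nat) :
  is_Hilbert ip ->
  (forall w, in_dual ip (A w)) -> in_dual ip F ->
  (exists v, A 0 v != F v) ->
  strongly_monotone ip A alpha ->
  loc_lipschitz ip A L ->
  potential A P ->
  fd_subspace XH ->
  alg_solver ip XH qalg Psi ->
  (forall v, 0 <= eta v) ->
  0 < lamlin -> 0 < lamalg -> (1 <= imin)%N ->
  let M := dual_norm ip (fun v => F v - A 0 v) / alpha in
  let tau := M + 3 * M * Num.sqrt (L (3 * M) / alpha) in
  hnorm ip (u 0%N 0%N) <= 2 * M ->
  (* the k-loop of level l runs up to step k+1, and the i-loop of step
     k+1 terminates, i.e. (l,k+1,ib) in Q *)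
  ailfem_level_run ip A F XH delta Psi eta lamlin lamalg imin u ustar ib k.+1 ->
  (* k < kbar[l]: the k-loop did not stop at any step 1..k *)
  (forall j : nat, (1 <= j <= k)%N -> ~ outer_stop ip F P M eta lamlin u ib j) ->
  hnorm ip (u k (ib k)) <= tau ->
  qalg ^+ imin <= 1 / 3 ->
  0 < delta -> delta < 1 / L (5 * tau) -> delta < 2 * alpha / L (2 * tau) ^+ 2 ->
  let d := hnorm ip (u k.+1 (ib k.+1) - u k (ib k)) in
  0 <= (1 / (2 * delta) - L (5 * tau) / 2) * d ^+ 2 /\
  (1 / (2 * delta) - L (5 * tau) / 2) * d ^+ 2
    <= energy F P (u k (ib k)) - energy F P (u k.+1 (ib k.+1)) /\
  energy F P (u k (ib k)) - energy F P (u k.+1 (ib k.+1))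
    <= (1 / (delta * (1 - qalg ^+ imin)) - alpha / 2) * d ^+ 2.
Proof.
move=> hH A_dual F_dual [v0 Av0] sm lip pot XH_sub solver _ _ _ _ M tau _ run _.
move=> w_tau q_imin delta0 delta_L _ d.
have hip := hH.1; have alpha0 := sm.1; have [q0 q1 _] := solver.
have phi_dual := in_dualB F_dual (A_dual 0).
have phi_v0 : F v0 - A 0 v0 != 0 by rewrite subr_eq0 eq_sym.
have M0 : 0 < M by rewrite divr_gt0 // (dual_norm_gt0 hip phi_dual phi_v0).
have M_tau : M <= tau by rewrite /tau lerDl mulr_ge0 ?sqrtr_ge0 // mulr_ge0 // ltW.
have tau0 : 0 < tau := lt_le_trans M0 M_tau.
have tau5 : 0 < 5 * tau by rewrite mulr_gt0.
have alpha_L : alpha <= L (5 * tau).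
  apply: (strongly_monotone_le_lipschitz hip sm lip tau5 (v := v0)).
  by apply: contra_neq phi_v0 => ->; rewrite (linear_form0 phi_dual.1).
have delta_L1 : delta * L (5 * tau) < 1.
  by rewrite -ltr_pdivlMr // (lt_le_trans alpha0 alpha_L).
have [Xw zx Xv err imin_ib] := ailfem_run_last_step solver run.
have q_small : 0 <= qalg ^+ imin <= 1 / 3 by rewrite q_imin exprn_ge0 // ltW.
have {}err := le_trans err
  (ler_wpM2r (hnorm_ge0 _ _) (ler_wiXn2l (ltW q0) (ltW q1) imin_ib)).
have w_5tau : hnorm ip (u k (ib k)) <= 5 * tau.
  by apply: le_trans w_tau _; rewrite ler_pMl // ler1n.
have step_le := zarantonello_step_le hip A_dual F_dual XH_sub lip tau5 alpha0 alpha_L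
  delta0 (ltW delta_L1) Xw zx w_5tau.
have wd_5tau : hnorm ip (u k (ib k)) + d <= 5 * tau.
  have [q_ge0 q_le] := andP q_small; have := rel_err_hnorm_le hip err.
  rewrite -/d -/M in step_le *; set a := hnorm ip (ustar k.+1 - _) in step_le *.
  set nw := hnorm ip (u k (ib k)) in w_tau step_le *.
  set q := qalg ^+ imin in q_ge0 q_le *.
  have a_le : a <= 2 * tau by lra.
  by have := ler_wpM2l q_ge0 a_le; nra.
have /andP[lower upper] := inexact_zarantonello_energy_bounds hip pot A_dual F_dual
  XH_sub sm lip tau5 delta0 q_small Xw Xv zx err wd_5tau.
split; [|by []]; rewrite mulr_ge0 ?sqr_ge0 // subr_ge0 ler_pdivlMr ?mulr_gt0 //.
by move: delta_L1; set Lt := L _; lra.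
Qed.
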